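(* Let $\mathcal K\subseteq\mathbb{Z}$ be finite and $\Omega=\bigcup_{k\in\mathcal K}(k\pi-\pi/2,\,k\pi+\pi/2)$. Then $\tan:\Omega\to\mathbb{R}$ is amenable.
   Context: Relative distance on $\mathbb{R}$: $\mathrm{dist}(x,y)=0$ if $x=y=0$, $\mathrm{dist}(x,y)=|\log(y/x)|$ if $xy>0$, and $\mathrm{dist}(x,y)=\infty$ otherwise. For a real analytic function $f$ on an open set $\Omega\subseteq\mathbb{R}$, not identically zero, the condition number is $\kappa(f,x)=0$ if $x=0$, $\kappa(f,x)=\infty$ if $x\neq0$ and $f(x)=0$, and $\kappa(f,x)=|x|\,|f'(x)|/|f(x)|$ otherwise; $\mu(f,x)=1+\kappa(f,x)$. $f:\Omega\to\mathbb{R}$ is amenable if there is $C>0$ such that for every $x\in\Omega$ with $\kappa(f,x)<\infty$, the set $B_x=\{y\in\mathbb{R}:\mathrm{dist}(y,x)<1/(C\mu(f,x))\}$ is contained in $\Omega$ and $\mu(f,y)\leq C\mu(f,x)$ for all $y\in B_x$. *)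

From Stdlib Require Import Reals Lra ZArith List.
From Coquelicot Require Import Coquelicot.
Open Scope R_scope.

Definition rel_dist (x y : R) : Rbar :=
  if Req_EM_T x 0 then (if Req_EM_T y 0 then Finite 0 else p_infty)
  else if Rlt_dec 0 (x * y) then Finite (Rabs (ln (y / x)))
  else p_infty.

Definition kappa (f : R -> R) (x : R) : Rbar :=
  if Req_EM_T x 0 then Finite 0
  else if Req_EM_T (f x) 0 then p_infty
  else Finite (Rabs x * Rabs (Derive f x) / Rabs (f x)).

Definition mu (f : R -> R) (x : R) : Rbar := Rbar_plus (Finite 1) (kappa f x).

Definition amenable (Omega : R -> Prop) (f : R -> R) : Prop :=
  exists C : R, 0 < C /\
    forall x : R, Omega x -> Rbar_lt (kappa f x) p_infty ->
      forall m : R, mu f x = Finite m ->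
        forall y : R, Rbar_lt (rel_dist y x) (Finite (1 / (C * m))) ->
          Omega y /\ Rbar_le (mu f y) (Finite (C * m)).

Definition tan_domain (K : list Z) (x : R) : Prop :=
  exists k : Z, In k K /\ IZR k * PI - PI / 2 < x /\ x < IZR k * PI + PI / 2.

From Stdlib Require Import Reals Lra ZArith List.
From Coquelicot Require Import Coquelicot.
Open Scope R_scope.

(* For x <> 0 in the branch around k*PI, kappa(tan, x) = |x| / (|sin x| |cos x|), and
   |sin x|, |cos x| are within a factor 3 of the distances from x to k*PI and to the
   branch endpoints k*PI +- PI/2.  A relative perturbation of size 1 / (32 mu(x)) moves x
   by at most |sin x| |cos x| / 16, a sixteenth of both distances, so y stays in the
   branch, |sin| and |cos| shrink by at most a factor 4 and |y| <= 2 |x|; hence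
   kappa(tan, y) <= 32 kappa(tan, x). *)

Lemma sin_ge_third a : 0 <= a <= 2 -> a / 3 <= sin a.
Proof.
  intros [Ha0 Ha2].
  destruct (sin_bound a 0 Ha0) as [Hlow _]; [generalize PI_4, PI2_3_2; lra|].
  unfold sin_approx, sin_term in Hlow; simpl in Hlow.
  nra.
Qed.

Lemma sin_le_id a : 0 <= a -> sin a <= a.
Proof.
  intros Ha; destruct (Req_dec a 0) as [->|Ha0].
  - rewrite sin_0; lra.
  - left; apply sin_lt_x; lra.
Qed.

Lemma Rabs_sin_Rabs u : Rabs u <= PI -> Rabs (sin u) = sin (Rabs u).
Proof.
  intros Hu; unfold Rabs at 2; destruct (Rcase_abs u) as [Hneg|Hpos].
  - rewrite Rabs_left in Hu by lra.
    assert (0 <= sin (- u)) by (apply sin_ge_0; lra).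
    rewrite sin_neg in *; apply Rabs_left1; lra.
  - apply Rabs_right, Rle_ge, sin_ge_0; rewrite Rabs_right in Hu; lra.
Qed.

Lemma cos_Rabs u : cos (Rabs u) = cos u.
Proof.
  unfold Rabs; destruct (Rcase_abs u); [apply cos_neg|reflexivity].
Qed.

Lemma Rabs_sin_bounds u : Rabs u <= PI / 2 -> Rabs u / 3 <= Rabs (sin u) <= Rabs u.
Proof.
  intros Hu; pose proof (Rabs_pos u); pose proof PI_4; pose proof PI2_3_2.
  rewrite Rabs_sin_Rabs by lra; split.
  - apply sin_ge_third; lra.
  - apply sin_le_id; lra.
Qed.

Lemma cos_bounds u : Rabs u <= PI / 2 -> (PI / 2 - Rabs u) / 3 <= cos u <= PI / 2 - Rabs u.
Proof.
  intros Hu; pose proof (Rabs_pos u); pose proof PI_4.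
  rewrite <- cos_Rabs, <- sin_shift; split.
  - apply sin_ge_third; lra.
  - apply sin_le_id; lra.
Qed.

Lemma Rabs_cos_kPI k : Rabs (cos (IZR k * PI)) = 1.
Proof.
  rewrite Rtrigo_facts.cos_sin_Rabs, sin_eq_0_1 by eauto.
  rewrite Rsqr_0, Rminus_0_r; exact sqrt_1.
Qed.

Lemma Rabs_sin_shift_kPI k u : Rabs (sin (IZR k * PI + u)) = Rabs (sin u).
Proof.
  rewrite sin_plus, (sin_eq_0_1 (IZR k * PI)) by eauto.
  rewrite Rmult_0_l, Rplus_0_l, Rabs_mult, Rabs_cos_kPI; ring.
Qed.

Lemma Rabs_cos_shift_kPI k u : Rabs (cos (IZR k * PI + u)) = Rabs (cos u).
Proof.
  rewrite cos_plus, (sin_eq_0_1 (IZR k * PI)) by eauto.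
  rewrite Rmult_0_l, Rminus_0_r, Rabs_mult, Rabs_cos_kPI; ring.
Qed.

Lemma sin_cos_stable u v : Rabs u < PI / 2 ->
  Rabs (v - u) <= Rabs (sin u) * Rabs (cos u) / 16 ->
  Rabs v < PI / 2 /\ Rabs (sin u) <= 4 * Rabs (sin v) /\ Rabs (cos u) <= 4 * Rabs (cos v).
Proof.
  intros Hu Hvu.
  destruct (Rabs_sin_bounds u ltac:(lra)) as [Su_lo Su_hi].
  destruct (cos_bounds u ltac:(lra)) as [Cu_lo Cu_hi].
  assert (Su1 : Rabs (sin u) <= 1) by (apply Rabs_le, SIN_bound).
  assert (Cu1 : Rabs (cos u) <= 1) by (apply Rabs_le, COS_bound).
  rewrite (Rabs_right (cos u)) in * by lra.
  assert (Hv_lo : 15 * Rabs u / 16 <= Rabs v).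
  { pose proof (Rabs_triang_inv u (u - v)); rewrite Rabs_minus_sym in Hvu.
    replace (u - (u - v)) with v in * by ring; nra. }
  assert (Hv_hi : Rabs v <= Rabs u + (PI / 2 - Rabs u) / 16).
  { pose proof (Rabs_triang u (v - u)); replace (u + (v - u)) with v in * by ring.
    nra. }
  assert (Hv : Rabs v < PI / 2) by lra.
  destruct (Rabs_sin_bounds v ltac:(lra)) as [Sv_lo _].
  destruct (cos_bounds v ltac:(lra)) as [Cv_lo _].
  rewrite (Rabs_right (cos v)) by lra.
  split; [exact Hv | split; lra].
Qed.

Lemma tan_domain_cos_neq0 K x : tan_domain K x -> cos x <> 0.
Proof.
  intros [k [_ Hk]] Hc.
  replace x with (IZR k * PI + (x - IZR k * PI)) in Hc by ring.
  assert (Hu : Rabs (x - IZR k * PI) < PI / 2) by (apply Rabs_def1; lra).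
  destruct (cos_bounds (x - IZR k * PI) ltac:(lra)) as [Hlo _].
  pose proof (Rabs_cos_shift_kPI k (x - IZR k * PI)) as E.
  rewrite Hc, Rabs_R0 in E.
  assert (cos (x - IZR k * PI) <= 0) by (generalize (Rle_abs (cos (x - IZR k * PI))); lra).
  lra.
Qed.

Lemma tan_domain_stable K x y : tan_domain K x ->
  Rabs (y - x) <= Rabs (sin x) * Rabs (cos x) / 16 ->
  tan_domain K y /\ Rabs (sin x) <= 4 * Rabs (sin y) /\ Rabs (cos x) <= 4 * Rabs (cos y).
Proof.
  intros [k [Hin Hk]] Hyx.
  set (u := x - IZR k * PI); set (v := y - IZR k * PI).
  assert (Ex : x = IZR k * PI + u) by (unfold u; ring).
  assert (Ey : y = IZR k * PI + v) by (unfold v; ring).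
  assert (Hu : Rabs u < PI / 2) by (apply Rabs_def1; unfold u; lra).
  rewrite Ex, Ey, !Rabs_sin_shift_kPI, !Rabs_cos_shift_kPI in *.
  replace (IZR k * PI + v - (IZR k * PI + u)) with (v - u) in Hyx by ring.
  destruct (sin_cos_stable u v Hu Hyx) as [Hv Hsc].
  split; [|exact Hsc].
  exists k; split; [exact Hin|]; apply Rabs_def2 in Hv; lra.
Qed.

Lemma Derive_tan x : cos x <> 0 -> Derive tan x = / cos x ^ 2.
Proof.
  intros Hc; apply is_derive_unique; unfold tan.
  auto_derive; [exact Hc|].
  pose proof (sin2_cos2 x) as E; unfold Rsqr in E.
  field_simplify; [|exact Hc..].
  f_equal; simpl; lra.
Qed.

Lemma sin_neq0_of_kappa_tan_finite x : x <> 0 -> Rbar_lt (kappa tan x) p_infty -> sin x <> 0.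
Proof.
  unfold kappa, tan; intros Hx Hk Hs; rewrite Hs in Hk.
  destruct (Req_EM_T x 0) as [|_]; [contradiction|].
  destruct (Req_EM_T (0 / cos x) 0) as [_|Hn]; [exact Hk|].
  apply Hn; unfold Rdiv; ring.
Qed.

Lemma kappa_tan x : x <> 0 -> sin x <> 0 -> cos x <> 0 ->
  kappa tan x = Finite (Rabs x / (Rabs (sin x) * Rabs (cos x))).
Proof.
  intros Hx Hs Hc; unfold kappa.
  destruct (Req_EM_T x 0) as [|_]; [contradiction|].
  destruct (Req_EM_T (tan x) 0) as [Ht|_].
  { unfold tan, Rdiv in Ht; apply Rmult_integral in Ht.
    destruct Ht as [|Ht]; [contradiction|destruct (Rinv_neq_0_compat _ Hc Ht)]. }
  rewrite Derive_tan by exact Hc; f_equal; unfold tan.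
  assert (0 < Rabs (sin x)) by (apply Rabs_pos_lt; exact Hs).
  assert (0 < Rabs (cos x)) by (apply Rabs_pos_lt; exact Hc).
  rewrite Rabs_div, Rabs_inv, <- RPow_abs by exact Hc.
  field; lra.
Qed.

Lemma mu_ge_1 f x m : mu f x = Finite m -> 1 <= m.
Proof.
  unfold mu, kappa; intros Hm.
  destruct (Req_EM_T x 0); [|destruct (Req_EM_T (f x) 0)];
    simpl in Hm; try discriminate; injection Hm as <-; [lra|].
  assert (0 <= Rabs x * Rabs (Derive f x) / Rabs (f x)).
  { apply Rdiv_le_0_compat; [apply Rmult_le_pos; apply Rabs_pos|apply Rabs_pos_lt; assumption]. }
  lra.
Qed.

Lemma Rabs_exp_sub1_le t : Rabs t <= 1 / 2 -> Rabs (exp t - 1) <= 2 * Rabs t.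
Proof.
  intros Ht; pose proof (exp_ineq1_le t); pose proof (exp_ineq1_le (- t)).
  rewrite exp_Ropp in *; pose proof (exp_pos t).
  destruct (Rle_dec 0 t) as [Hpos|Hneg].
  - rewrite (Rabs_right t) in * by lra.
    assert (exp t * (1 - t) <= 1).
    { replace 1 with (exp t * / exp t) at 2 by (field; lra); nra. }
    apply Rabs_le; split; nra.
  - rewrite (Rabs_left t) in * by lra.
    assert (exp t < 1) by (rewrite <- exp_0; apply exp_increasing; lra).
    apply Rabs_le; split; lra.
Qed.

Lemma rel_dist_lt_Rabs_sub x y d : 0 < d <= 1 / 2 ->
  Rbar_lt (rel_dist y x) (Finite d) -> Rabs (y - x) <= 2 * d * Rabs x.
Proof.
  intros Hd; unfold rel_dist.
  destruct (Req_EM_T y 0) as [->|Hy0].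
  - destruct (Req_EM_T x 0) as [->|]; [|simpl; tauto].
    intros _; rewrite Rminus_0_r, Rabs_R0; lra.
  - destruct (Rlt_dec 0 (y * x)) as [Hyx|]; [simpl; intros Hl|simpl; tauto].
    assert (Hx0 : x <> 0) by (intros ->; lra).
    assert (Hq : 0 < x / y).
    { replace (x / y) with (y * x / (y * y)) by (field; exact Hy0).
      apply Rdiv_lt_0_compat; [exact Hyx|nra]. }
    set (t := - ln (x / y)).
    assert (Ey : y - x = x * (exp t - 1)).
    { unfold t; rewrite exp_Ropp, exp_ln by exact Hq; field; auto. }
    assert (Ht : Rabs t < d) by (unfold t; rewrite Rabs_Ropp; exact Hl).
    rewrite Ey, Rabs_mult.
    pose proof (Rabs_exp_sub1_le t ltac:(lra)); pose proof (Rabs_pos x); nra.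
Qed.

Lemma tan_mu_stable K x y : tan_domain K x -> x <> 0 -> sin x <> 0 ->
  Rabs (y - x) <= Rabs x / (16 * (1 + Rabs x / (Rabs (sin x) * Rabs (cos x)))) ->
  tan_domain K y /\
  Rbar_le (mu tan y) (Finite (32 * (1 + Rabs x / (Rabs (sin x) * Rabs (cos x))))).
Proof.
  intros Hx Hx0 Hs Hyx.
  pose proof (tan_domain_cos_neq0 K x Hx) as Hc.
  assert (HS : 0 < Rabs (sin x)) by (apply Rabs_pos_lt; exact Hs).
  assert (HC : 0 < Rabs (cos x)) by (apply Rabs_pos_lt; exact Hc).
  assert (HSC := Rmult_lt_0_compat _ _ HS HC).
  set (q := Rabs x / (Rabs (sin x) * Rabs (cos x))) in *.
  assert (Hq : Rabs x = q * (Rabs (sin x) * Rabs (cos x))) by (unfold q; field; lra).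
  assert (Hq0 : 0 <= q) by (apply Rdiv_le_0_compat; [apply Rabs_pos|exact HSC]).
  set (r := Rabs x / (16 * (1 + q))) in Hyx.
  assert (Hr : r * (16 * (1 + q)) = Rabs x) by (unfold r; field; lra).
  assert (Hyx_x : Rabs (y - x) <= Rabs x / 16) by nra.
  assert (Hyx_sc : Rabs (y - x) <= Rabs (sin x) * Rabs (cos x) / 16) by nra.
  destruct (tan_domain_stable K x y Hx Hyx_sc) as [Hy [HSy HCy]].
  split; [exact Hy|].
  assert (Hy_lo := Rabs_triang_inv x (x - y)).
  assert (Hy_hi := Rabs_triang x (y - x)).
  replace (x - (x - y)) with y in Hy_lo by ring.
  replace (x + (y - x)) with y in Hy_hi by ring.
  rewrite Rabs_minus_sym in Hy_lo.
  assert (Hx_pos := Rabs_pos_lt x Hx0).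
  assert (Hy0 : y <> 0) by (intros ->; rewrite Rabs_R0 in Hy_lo; lra).
  assert (Hsy : sin y <> 0) by (intros E; rewrite E, Rabs_R0 in HSy; lra).
  assert (Hcy : cos y <> 0) by (intros E; rewrite E, Rabs_R0 in HCy; lra).
  unfold mu; rewrite kappa_tan by assumption; simpl.
  assert (Rabs y / (Rabs (sin y) * Rabs (cos y)) <= 32 * q).
  { assert (Rabs (sin x) * Rabs (cos x) <= 16 * (Rabs (sin y) * Rabs (cos y))).
    { replace (16 * _) with ((4 * Rabs (sin y)) * (4 * Rabs (cos y))) by ring.
      apply Rmult_le_compat; lra. }
    apply Rle_div_l; [apply Rmult_lt_0_compat; lra|]. nra. }
  lra.
Qed.

Theorem mainTheorem11 (K : list Z) : amenable (tan_domain K) tan.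
Proof.
  exists 32; split; [lra|].
  intros x Hx Hk m Hm y Hy.
  assert (Hm1 := mu_ge_1 tan x m Hm).
  assert (Hd : 0 < 1 / (32 * m) <= 1 / 2).
  { split; [apply Rdiv_lt_0_compat; lra|apply Rmult_le_compat_l; [lra|apply Rinv_le_contravar; lra]]. }
  assert (Hyx := rel_dist_lt_Rabs_sub x y _ Hd Hy).
  destruct (Req_EM_T x 0) as [->|Hx0].
  - rewrite Rabs_R0, Rmult_0_r, Rminus_0_r in Hyx.
    assert (y = 0) as -> by (apply Rabs_eq_0; apply Rle_antisym; [exact Hyx|apply Rabs_pos]).
    split; [exact Hx|rewrite Hm; simpl; lra].
  - assert (Hs := sin_neq0_of_kappa_tan_finite x Hx0 Hk).
    unfold mu in Hm; rewrite kappa_tan in Hm by eauto using tan_domain_cos_neq0.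
    simpl in Hm; injection Hm as Hm.
    replace (2 * (1 / (32 * m)) * Rabs x) with (Rabs x / (16 * m)) in Hyx by (field; lra).
    subst m; apply tan_mu_stable; assumption.
Qed.
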